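(* Let $\alpha\in\mathbb N=\{1,2,\ldots\}$ and define the real-valued measure $$\mu_\alpha=(1-q^\alpha)\sum_{k=0}^\infty q^{\alpha k}\delta_{q^k/\phi}.$$ Then $\mu_\alpha$ has total mass $1$ and for every $n\ge 0$, $$\int x^n\,d\mu_\alpha(x)=\frac{F_\alpha}{F_{\alpha+n}}.$$ Moreover $\mu_\alpha$ is a positive (probability) measure when $\alpha$ is even. In particular, $(1/F_{n+2})_{n\ge 0}$ is the moment sequence of the probability measure $\mu_2=(1-q^2)\sum_{k\ge 0}q^{2k}\delta_{q^k/\phi}$.
   Context: $F_n$ denotes the Fibonacci numbers: $F_0=0$, $F_1=1$, $F_{n+1}=F_n+F_{n-1}$. $\phi=(1+\sqrt5)/2$ and $q=(1-\sqrt5)/(1+\sqrt5)=1/\phi-1$, so $-1<q<0$. $\delta_a$ denotes the unit point mass at $a$. *)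

From Stdlib Require Import Reals Lra Lia ClassicalEpsilon.
From Coquelicot Require Import Coquelicot.
Open Scope R_scope.

Fixpoint fib (n : nat) : nat :=
  match n with
  | O => O
  | S m => match m with
           | O => 1%nat
           | S p => (fib m + fib p)%nat
           end
  end.

Definition phi : R := (1 + sqrt 5) / 2.
Definition q : R := (1 - sqrt 5) / (1 + sqrt 5).

(* mu_alpha = (1 - q^alpha) sum_k q^(alpha k) delta_{q^k/phi}:
   weight and location of the k-th atom. *)
Definition mu_weight (alpha k : nat) : R := (1 - q ^ alpha) * q ^ (alpha * k).
Definition mu_atom (k : nat) : R := q ^ k / phi.

Definition mu (alpha : nat) (A : R -> Prop) : R :=
  Series (fun k => if excluded_middle_informative (A (mu_atom k))
                   then mu_weight alpha k else 0).

(* The terms of  \int f d mu_alpha = sum_k w_k f(x_k). *)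
Definition mu_int_terms (alpha : nat) (f : R -> R) (k : nat) : R :=
  mu_weight alpha k * f (mu_atom k).

(* Since q = psi / phi with psi = (1 - sqrt 5) / 2, Binet's formula reads
   F_m sqrt 5 = phi^m (1 - q^m).  The n-th moment of mu_alpha is the geometric
   series (1 - q^alpha) phi^-n sum_k q^((alpha + n) k)
   = (1 - q^alpha) / (phi^n (1 - q^(alpha + n))), which is F_alpha / F_(alpha + n)
   by Binet's formula; n = 0 gives the total mass.  For even alpha,
   0 <= q^alpha < 1, so every atom has a nonnegative weight. *)
From Stdlib Require Import Reals Lra Lia ClassicalEpsilon.
From Coquelicot Require Import Coquelicot.
Open Scope R_scope.

Definition psi : R := (1 - sqrt 5) / 2.

Lemma sqrt5_sqr : sqrt 5 * sqrt 5 = 5.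
Proof. apply sqrt_sqrt; lra. Qed.

Lemma sqrt5_bounds : 2 < sqrt 5 < 3.
Proof. pose proof sqrt5_sqr; pose proof (sqrt_pos 5); nra. Qed.

Lemma phi_pos : 0 < phi.
Proof. unfold phi; pose proof sqrt5_bounds; lra. Qed.

Lemma phi_sqr : phi ^ 2 = phi + 1.
Proof. unfold phi; pose proof sqrt5_sqr; simpl; nra. Qed.

Lemma psi_sqr : psi ^ 2 = psi + 1.
Proof. unfold psi; pose proof sqrt5_sqr; simpl; nra. Qed.

Lemma binet m : INR (fib m) * sqrt 5 = phi ^ m - psi ^ m.
Proof.
  enough (H : INR (fib m) * sqrt 5 = phi ^ m - psi ^ m /\
              INR (fib (S m)) * sqrt 5 = phi ^ S m - psi ^ S m) by apply H.
  induction m as [|m [IHm IHSm]].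
  - split; simpl; [ring | unfold phi, psi; field].
  - split; [exact IHSm|].
    change (fib (S (S m))) with (fib (S m) + fib m)%nat.
    rewrite plus_INR, Rmult_plus_distr_r, IHm, IHSm.
    replace (phi ^ S (S m)) with (phi ^ 2 * phi ^ m) by (simpl; ring).
    replace (psi ^ S (S m)) with (psi ^ 2 * psi ^ m) by (simpl; ring).
    rewrite phi_sqr, psi_sqr; simpl; ring.
Qed.

Lemma q_eq : q = psi / phi.
Proof. unfold q, psi, phi; pose proof sqrt5_bounds; field; lra. Qed.

Lemma binet_q m : INR (fib m) * sqrt 5 = phi ^ m * (1 - q ^ m).
Proof.
  pose proof phi_pos.
  rewrite binet, q_eq; unfold Rdiv; rewrite Rpow_mult_distr, pow_inv.
  field; apply pow_nonzero; lra.
Qed.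

Lemma q_bounds : -1 < q < 0.
Proof.
  unfold q; pose proof sqrt5_bounds.
  split; apply Rmult_lt_reg_r with (1 + sqrt 5); try lra; field_simplify; lra.
Qed.

Lemma Rabs_q_pow_lt_1 m : (1 <= m)%nat -> Rabs (q ^ m) < 1.
Proof.
  intros Hm; rewrite <- RPow_abs; pose proof q_bounds.
  apply pow_lt_1_compat; [rewrite Rabs_left by lra; lra | lia].
Qed.

Lemma INR_fib_pos m : (1 <= m)%nat -> 0 < INR (fib m).
Proof.
  intros Hm; pose proof (binet_q m); pose proof sqrt5_bounds.
  pose proof (Rabs_q_pow_lt_1 m Hm) as Hq; apply Rabs_def2 in Hq.
  assert (0 < phi ^ m) by (apply pow_lt, phi_pos).
  nra.
Qed.

Lemma fib_ratio a n : (1 <= a)%nat ->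
  INR (fib a) / INR (fib (a + n)) = (1 - q ^ a) / (phi ^ n * (1 - q ^ (a + n))).
Proof.
  intros Ha; pose proof phi_pos; pose proof sqrt5_bounds.
  pose proof (INR_fib_pos (a + n) ltac:(lia)).
  pose proof (Rabs_q_pow_lt_1 (a + n) ltac:(lia)) as Hq; apply Rabs_def2 in Hq.
  assert (0 < phi ^ a) by (apply pow_lt; lra).
  assert (0 < phi ^ n) by (apply pow_lt; lra).
  replace (INR (fib a) / INR (fib (a + n)))
    with (INR (fib a) * sqrt 5 / (INR (fib (a + n)) * sqrt 5)) by (field; lra).
  rewrite !binet_q, pow_add; field; lra.
Qed.

Lemma mu_moment_terms alpha n k :
  mu_int_terms alpha (fun x => x ^ n) k
  = (q ^ (alpha + n)) ^ k * ((1 - q ^ alpha) / phi ^ n).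
Proof.
  pose proof phi_pos.
  unfold mu_int_terms, mu_weight, mu_atom, Rdiv.
  rewrite Rpow_mult_distr, pow_inv, <- !pow_mult.
  replace ((alpha + n) * k)%nat with (alpha * k + k * n)%nat by lia.
  rewrite pow_add; ring.
Qed.

Lemma is_series_mu_moment alpha n : (1 <= alpha)%nat ->
  is_series (mu_int_terms alpha (fun x => x ^ n))
            ((1 - q ^ alpha) / (phi ^ n * (1 - q ^ (alpha + n)))).
Proof.
  intros Ha; pose proof phi_pos.
  pose proof (Rabs_q_pow_lt_1 (alpha + n) ltac:(lia)) as Hq; apply Rabs_def2 in Hq.
  assert (0 < phi ^ n) by (apply pow_lt; lra).
  replace ((1 - q ^ alpha) / (phi ^ n * (1 - q ^ (alpha + n))))
    with (/ (1 - q ^ (alpha + n)) * ((1 - q ^ alpha) / phi ^ n)) by (field; lra).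
  eapply is_series_ext; [intros k; symmetry; apply mu_moment_terms|].
  apply is_series_scal_r, is_series_geom, Rabs_q_pow_lt_1; lia.
Qed.

Lemma is_series_mu_weight alpha : (1 <= alpha)%nat ->
  is_series (fun k => mu_weight alpha k) 1.
Proof.
  intros Ha; pose proof (is_series_mu_moment alpha 0 Ha) as H.
  rewrite Nat.add_0_r in H.
  pose proof (Rabs_q_pow_lt_1 alpha Ha) as Hq; apply Rabs_def2 in Hq.
  replace ((1 - q ^ alpha) / (phi ^ 0 * (1 - q ^ alpha))) with 1 in H
    by (simpl; field; lra).
  eapply is_series_ext; [|exact H].
  intros k; unfold mu_int_terms; simpl; ring.
Qed.

Lemma mu_setT alpha : mu alpha (fun _ => True) = Series (fun k => mu_weight alpha k).
Proof.
  unfold mu; apply Series_ext; intros k.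
  destruct excluded_middle_informative; tauto.
Qed.

Lemma mu_nonneg alpha (A : R -> Prop) :
  (forall k, 0 <= mu_weight alpha k) -> ex_series (fun k => mu_weight alpha k) ->
  0 <= mu alpha A.
Proof.
  intros Hw Hex; unfold mu.
  set (t := fun k => if excluded_middle_informative (A (mu_atom k))
                     then mu_weight alpha k else 0).
  assert (Ht : forall k, 0 <= t k <= mu_weight alpha k).
  { intros k; unfold t; destruct excluded_middle_informative; split; try lra; apply Hw. }
  apply Rle_trans with (Series (fun k => 0 * t k)); [rewrite Series_scal_l; lra|].
  apply Series_le; [intros k; pose proof (Ht k); split; lra|].
  apply (@ex_series_le R_AbsRing R_CompleteNormedModule) with (fun k => mu_weight alpha k);
    [|exact Hex].
  intros k; change (norm (t k)) with (Rabs (t k)).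
  rewrite Rabs_right by (destruct (Ht k); lra); apply Ht.
Qed.

Lemma mu_weight_nonneg_even alpha k : (1 <= alpha)%nat -> Nat.Even alpha ->
  0 <= mu_weight alpha k.
Proof.
  intros Ha [m ->]; unfold mu_weight.
  pose proof (Rabs_q_pow_lt_1 (2 * m) Ha) as Hq; apply Rabs_def2 in Hq.
  apply Rmult_le_pos; [lra|].
  rewrite <- Nat.mul_assoc, pow_sqr; apply pow_le, Rle_0_sqr.
Qed.

Lemma is_series_mu_moment_fib alpha n : (1 <= alpha)%nat ->
  is_series (mu_int_terms alpha (fun x => x ^ n))
            (INR (fib alpha) / INR (fib (alpha + n))).
Proof. intros Ha; rewrite fib_ratio by exact Ha; apply is_series_mu_moment, Ha. Qed.

Lemma mu_nonneg_even alpha (A : R -> Prop) : (1 <= alpha)%nat -> Nat.Even alpha ->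
  0 <= mu alpha A.
Proof.
  intros Ha Hev; apply mu_nonneg.
  - intros k; apply mu_weight_nonneg_even; assumption.
  - eexists; apply is_series_mu_weight, Ha.
Qed.

Lemma mu_setT_eq_1 alpha : (1 <= alpha)%nat -> mu alpha (fun _ => True) = 1.
Proof. intros Ha; rewrite mu_setT; apply is_series_unique, is_series_mu_weight, Ha. Qed.

Theorem mainTheorem2 :
  (forall alpha : nat, (1 <= alpha)%nat ->
     (* total mass 1 *)
     is_series (fun k => mu_weight alpha k) 1 /\
     mu alpha (fun _ => True) = 1 /\
     (* moments *)
     (forall n : nat,
        is_series (mu_int_terms alpha (fun x => x ^ n))
                  (INR (fib alpha) / INR (fib (alpha + n))))) /\
  (* positivity for even alpha *)
  (forall alpha : nat, (1 <= alpha)%nat -> Nat.Even alpha ->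
     forall A : R -> Prop, 0 <= mu alpha A) /\
  (* in particular: (1/F_{n+2}) is the moment sequence of the probability mu_2 *)
  ((forall A : R -> Prop, 0 <= mu 2 A) /\ mu 2 (fun _ => True) = 1 /\
   forall n : nat,
     is_series (mu_int_terms 2 (fun x => x ^ n)) (1 / INR (fib (n + 2)))).
Proof.
  split; [|split; [|split; [|split]]].
  - intros alpha Ha; split; [|split].
    + apply is_series_mu_weight, Ha.
    + apply mu_setT_eq_1, Ha.
    + intros n; apply is_series_mu_moment_fib, Ha.
  - intros alpha Ha Hev A; apply mu_nonneg_even; assumption.
  - intros A; apply mu_nonneg_even; [lia | exists 1%nat; reflexivity].
  - apply mu_setT_eq_1; lia.
  - intros n; rewrite Nat.add_comm.
    exact (is_series_mu_moment_fib 2 n ltac:(lia)).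
Qed.
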